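(* Let $A(\bar y)$ be a quantifier-free formula containing no function symbols of positive arity, let $C$ be the (finite) set of constants occurring in $A$, or $C=\{c_0\}$ for a fixed constant $c_0$ if $A$ contains none. Then for every Gödel set $V$, the sentence $\exists\bar y\,A(\bar y)$ is valid in $G_V$ if and only if there are finitely many tuples $\bar t_1,\dots,\bar t_n$ of constants from $C$ such that the quantifier-free sentence $A(\bar t_1)\vee\dots\vee A(\bar t_n)$ is valid in $G_V$.
   Context: A Gödel set is a closed set $V\subseteq[0,1]$ with $0,1\in V$. A $V$-interpretation assigns to each $k$-ary predicate a function $U^k\to V$ on a nonempty domain $U$ (constants as usual); $\bot\mapsto0$, $\wedge,\vee$ are $\min,\max$, $\mathcal I(A\supset B)=1$ if $\mathcal I(A)\le\mathcal I(B)$ and $=\mathcal I(B)$ otherwise, $\forall,\exists$ are $\inf,\sup$ over $U$. A sentence is valid in $G_V$ if every $V$-interpretation gives it value $1$. *)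

From HB Require Import structures.
From mathcomp Require Import all_boot all_order all_algebra.
From mathcomp Require Import all_classical all_reals topology normedtype.
Set Implicit Arguments. Unset Strict Implicit. Unset Printing Implicit Defensive.
Import Order.TTheory GRing.Theory Num.Theory numFieldNormedType.Exports.
Local Open Scope ring_scope.
Local Open Scope classical_set_scope.

(* There are no function symbols of positive arity (the
   formula A of the statement contains none, so they are irrelevant). *)
Inductive term : Type :=
| Var : nat -> term
| Const : nat -> term.

(* A predicate symbol p applied to a list of k terms is the k-ary predicate
   (p,k); its interpretation is the restriction of [I_pred p] to lists of
   length k. *)
Inductive fml : Type :=
| Atom : nat -> seq term -> fml
| Bot : fml
| And : fml -> fml -> fml
| Or : fml -> fml -> fml
| Imp : fml -> fml -> fml
| All : nat -> fml -> fml
| Ex : nat -> fml -> fml.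

Fixpoint qfree (f : fml) : bool :=
  match f with
  | Atom _ _ | Bot => true
  | And a b | Or a b | Imp a b => qfree a && qfree b
  | All _ _ | Ex _ _ => false
  end.

Definition term_vars (t : term) : seq nat :=
  match t with Var v => [:: v] | Const _ => [::] end.
Definition term_consts (t : term) : seq nat :=
  match t with Var _ => [::] | Const c => [:: c] end.

Fixpoint free_vars (f : fml) : seq nat :=
  match f with
  | Atom _ ts => flatten (map term_vars ts)
  | Bot => [::]
  | And a b | Or a b | Imp a b => free_vars a ++ free_vars b
  | All x a | Ex x a => seq.filter (fun v => v != x) (free_vars a)
  end.

Fixpoint consts (f : fml) : seq nat :=
  match f with
  | Atom _ ts => flatten (map term_consts ts)
  | Bot => [::]
  | And a b | Or a b | Imp a b => consts a ++ consts b
  | All _ a | Ex _ a => consts a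
  end.

Definition exs (ys : seq nat) (A : fml) : fml := foldr Ex A ys.

(* Substitution of the constant tuple ts for the variable tuple ys in a
   quantifier-free formula (bound variables are left alone, which is correct
   substitution for quantifier-free formulas). *)
Definition inst_term (ys ts : seq nat) (t : term) : term :=
  match t with
  | Var v => if v \in ys then Const (nth 0%N ts (index v ys)) else Var v
  | Const c => Const c
  end.

Fixpoint inst (ys ts : seq nat) (f : fml) : fml :=
  match f with
  | Atom p args => Atom p (map (inst_term ys ts) args)
  | Bot => Bot
  | And a b => And (inst ys ts a) (inst ys ts b)
  | Or a b => Or (inst ys ts a) (inst ys ts b)
  | Imp a b => Imp (inst ys ts a) (inst ys ts b)
  | All x a => All x (inst ys ts a)
  | Ex x a => Ex x (inst ys ts a)
  end.

Fixpoint disj (a : fml) (l : seq fml) : fml :=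
  match l with
  | [::] => a
  | b :: l' => Or a (disj b l')
  end.

Definition goedel_set (R : realType) (V : set R) : Prop :=
  closed V /\ V `<=` `[0, 1] /\ V 0 /\ V 1.

Section Semantics.
Variables (R : realType) (U : Type).
Variables (I_const : nat -> U) (I_pred : nat -> seq U -> R).

Definition teval (e : nat -> U) (t : term) : U :=
  match t with Var v => e v | Const c => I_const c end.

Definition upd (e : nat -> U) (x : nat) (u : U) : nat -> U :=
  fun v => if v == x then u else e v.

Fixpoint eval (e : nat -> U) (f : fml) : R :=
  match f with
  | Atom p ts => I_pred p (map (teval e) ts)
  | Bot => 0
  | And a b => Num.min (eval e a) (eval e b)
  | Or a b => Num.max (eval e a) (eval e b)
  | Imp a b => if eval e a <= eval e b then 1 else eval e b
  | All x a => inf (range (fun u => eval (upd e x u) a))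
  | Ex x a => sup (range (fun u => eval (upd e x u) a))
  end.
End Semantics.

(* A V-interpretation: nonempty domain, constants interpreted in U, predicates
   take values in V. *)
Definition valid_in (R : realType) (V : set R) (f : fml) : Prop :=
  forall (U : Type) (u0 : U) (I_const : nat -> U) (I_pred : nat -> seq U -> R),
    (forall p args, V (I_pred p args)) ->
    forall e : nat -> U, eval I_const I_pred e f = 1.

(* Soundness: every disjunct A(t) is below the existential, with the values of
   the constants of t as witnesses.  Completeness: given any V-interpretation M,
   evaluate the existential in the Herbrand model on nat whose constants name
   themselves and whose predicates read a name c as M's value of c when c is in
   C, and as M's value of a fixed element of C otherwise.  Values there depend on
   the names only through these finitely many elements, so each supremum of the
   existential prefix is a maximum attained in C; validity makes it 1, and the
   maximising tuple t in C^n satisfies A(t) = 1 in M. *)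

From Pilot Require Import Defs.
From mathcomp Require Import all_boot all_order all_algebra.
From mathcomp Require Import all_classical all_reals topology normedtype.
Import Order.TTheory GRing.Theory Num.Theory.
Set Implicit Arguments. Unset Strict Implicit.
Local Open Scope ring_scope.
Local Open Scope classical_set_scope.

Local Notation eval := Defs.eval.

Fixpoint upds (U : Type) (e : nat -> U) (ys : seq nat) (us : seq U) : nat -> U :=
  if (ys, us) is (y :: ys', u :: us') then upds (upd e y u) ys' us' else e.

Lemma upds_notin (U : Type) (e : nat -> U) ys us v :
  v \notin ys -> upds e ys us v = e v.
Proof.
elim: ys us e => [|y ys IH] [|u us] e //=.
by rewrite inE negb_or => /andP[vy vys]; rewrite IH // /upd (negbTE vy).
Qed.

Lemma upds_nth (U : Type) (e : nat -> U) ys us v d :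
  uniq ys -> size us = size ys -> v \in ys ->
  upds e ys us v = nth d us (index v ys).
Proof.
elim: ys us e => [|y ys IH] [|u us] e //= /andP[yys uys] [sz].
rewrite inE; have [-> _|vy /= vys] := eqVneq v y; last by rewrite IH.
by rewrite upds_notin // /upd eqxx.
Qed.

Fixpoint tuples (C : seq nat) (n : nat) : seq (seq nat) :=
  if n is n'.+1 then [seq c :: t | c <- C, t <- tuples C n'] else [:: [::]].

Lemma mem_tuples C n t :
  (t \in tuples C n) = (size t == n) && all (mem C) t.
Proof.
elim: n t => [|n IH] [|c t] //=; first by apply/negbTE/allpairsP => -[[x y] [_ _]].
apply/allpairsP/idP => [[[x y] /= [xC yt [-> ->]]]|].
  by move: yt; rewrite IH eqSS xC.
by rewrite eqSS => /and3P[sz cC tC]; exists (c, t); rewrite /= IH sz.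
Qed.

Lemma seq_argmax (I : eqType) (d : Order.disp_t) (T : orderType d) (f : I -> T) (C : seq I) :
  C != [::] -> exists2 c, c \in C & {in C, forall c', (f c' <= f c)%O}.
Proof.
elim: C => [//|c C IH] _; have [->|/IH[m mC Hm]] := eqVneq C [::].
  by exists c => [|c']; rewrite ?mem_seq1 // => /eqP->.
have [cm|mc] := leP (f c) (f m).
  by exists m => [|c']; rewrite inE ?mC ?orbT // => /orP[/eqP->|/Hm].
exists c => [|c']; rewrite inE ?eqxx // => /orP[/eqP->//|/Hm/le_trans]; apply.
exact: ltW.
Qed.

Section Evaluation.
Variables (R : realType) (U : Type) (Ic : nat -> U) (Ip : nat -> seq U -> R).
Implicit Types (e : nat -> U) (F : fml).

Lemma sup_range01 (u0 : U) (f : U -> R) :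
  (forall u, 0 <= f u <= 1) -> 0 <= sup (range f) <= 1.
Proof.
move=> f01; have ne : range f !=set0 by exists (f u0), u0.
apply/andP; split; last by apply: ge_sup => // _ [u _ <-]; case/andP: (f01 u).
apply: le_trans (_ : f u0 <= _); first by case/andP: (f01 u0).
by apply: ub_le_sup; [exists 1 => _ [u _ <-]; case/andP: (f01 u)|exists u0].
Qed.

Lemma inf_range01 (u0 : U) (f : U -> R) :
  (forall u, 0 <= f u <= 1) -> 0 <= inf (range f) <= 1.
Proof.
move=> f01; have ne : range f !=set0 by exists (f u0), u0.
apply/andP; split; first by apply: lb_le_inf => // _ [u _ <-]; case/andP: (f01 u).
apply: le_trans (_ : f u0 <= 1); last by case/andP: (f01 u0).
by apply: ge_inf; [exists 0 => _ [u _ <-]; case/andP: (f01 u)|exists u0].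
Qed.

Hypothesis (u0 : U) (Ip01 : forall p l, 0 <= Ip p l <= 1).

Lemma eval01 e F : 0 <= eval Ic Ip e F <= 1.
Proof.
elim: F e => [p ts| |a IHa b IHb|a IHa b IHb|a IHa b IHb|x a IHa|x a IHa] e /=.
- exact: Ip01.
- by rewrite lexx ler01.
- case/andP: (IHa e) => a0 a1; case/andP: (IHb e) => b0 b1.
  by rewrite le_min a0 b0 ge_min a1.
- case/andP: (IHa e) => a0 a1; case/andP: (IHb e) => b0 b1.
  by rewrite le_max a0 ge_max a1 b1.
- by case: ifP => _; rewrite ?lexx ?ler01.
- exact: inf_range01.
- exact: sup_range01.
Qed.

Lemma eval_eq1 e F : 1 <= eval Ic Ip e F -> eval Ic Ip e F = 1.
Proof. by move=> ge1; apply/le_anti; case/andP: (eval01 e F) => _ ->. Qed.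

Lemma le_eval_exs ys us e A : size us = size ys ->
  eval Ic Ip (upds e ys us) A <= eval Ic Ip e (exs ys A).
Proof.
elim: ys us e => [|y ys IH] [|u us] e //= [sz].
apply: le_trans (IH us (upd e y u) sz) _; apply: ub_le_sup; last by exists u.
by exists 1 => _ [w _ <-]; case/andP: (eval01 (upd e y w) (exs ys A)).
Qed.

End Evaluation.

Section QuantifierFree.
Variable R : realType.

Lemma eval_qfree_morph (U1 U2 : Type) (I1c : nat -> U1) (I1p : nat -> seq U1 -> R)
    (I2c : nat -> U2) (I2p : nat -> seq U2 -> R) (h : U1 -> U2) e1 e2 F :
  qfree F -> (forall p l, I1p p l = I2p p (map h l)) ->
  {in free_vars F, forall v, h (e1 v) = e2 v} ->
  {in consts F, forall c, h (I1c c) = I2c c} ->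
  eval I1c I1p e1 F = eval I2c I2p e2 F.
Proof.
move=> + hp; elim: F => [p ts| |a IHa b IHb|a IHa b IHb|a IHa b IHb|//|//] //=.
  move=> _ hv hc; rewrite hp -map_comp; congr (I2p p _).
  elim: ts hv hc => //= t ts IH hv hc.
  rewrite IH => [|v hvs|c hcs]; last 2 first.
  - by apply: hv; rewrite mem_cat hvs orbT.
  - by apply: hc; rewrite mem_cat hcs orbT.
  congr (_ :: _); case: t hv hc => [v|c] /= hv hc; [apply: hv | apply: hc];
  by rewrite mem_head.
all: move=> /andP[qa qb] hv hc.
all: rewrite IHa ?IHb // => [v|c|v|c] hx;
  [apply: hv | apply: hc | apply: hv | apply: hc]; by rewrite mem_cat hx ?orbT.
Qed.

Lemma eval_inst (U : Type) (Ic : nat -> U) (Ip : nat -> seq U -> R) e ys t F :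
  qfree F -> uniq ys -> size t = size ys ->
  eval Ic Ip e (inst ys t F) = eval Ic Ip (upds e ys (map Ic t)) F.
Proof.
move=> + uys sz; elim: F => [p ts| |a IHa b IHb|a IHa b IHb|a IHa b IHb|//|//] //=.
  move=> _; rewrite -map_comp; congr (Ip p _); apply: eq_map => -[v|c] //=.
  case: ifP => [vys|/negbT vys]; last by rewrite upds_notin.
  by rewrite (upds_nth _ (Ic 0%N)) ?size_map // (nth_map 0%N) // sz index_mem.
all: by move=> /andP[qa qb]; rewrite IHa ?IHb.
Qed.

Lemma le_eval_inst_exs (U : Type) (u0 : U) (Ic : nat -> U) (Ip : nat -> seq U -> R)
    e ys t A :
  (forall p l, 0 <= Ip p l <= 1) -> qfree A -> uniq ys -> size t = size ys ->
  eval Ic Ip e (inst ys t A) <= eval Ic Ip e (exs ys A).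
Proof.
move=> Ip01 qA uys sz; rewrite eval_inst //.
by apply: le_eval_exs => //; rewrite size_map.
Qed.

End QuantifierFree.

Section Disjunction.
Variables (R : realType) (U : Type) (Ic : nat -> U) (Ip : nat -> seq U -> R) (e : nat -> U).

Lemma eval_disj_mem a l : eval Ic Ip e (disj a l) \in map (eval Ic Ip e) (a :: l).
Proof.
elim: l a => [|b l IH] a /=; first by rewrite mem_seq1.
rewrite inE maxEle; case: ifP => _; last by rewrite eqxx.
by move: (IH b); rewrite /= inE => ->; rewrite orbT.
Qed.

Lemma le_eval_disj a l x :
  x \in map (eval Ic Ip e) (a :: l) -> x <= eval Ic Ip e (disj a l).
Proof.
elim: l a => [|b l IH] a /=; first by rewrite mem_seq1 => /eqP->.
by rewrite inE le_max => /orP[/eqP->|/IH->]; rewrite ?lexx ?orbT.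
Qed.

End Disjunction.

Section Herbrand.
Variables (R : realType) (D : eqType) (U : Type) (g : D -> U).
Variables (Ic : nat -> D) (Ip : nat -> seq U -> R).

Local Notation evalg := (eval Ic (fun p l => Ip p (map g l))).

Lemma eval_comap_congr F (e1 e2 : nat -> D) :
  (forall v, g (e1 v) = g (e2 v)) -> evalg e1 F = evalg e2 F.
Proof.
elim: F e1 e2 => [p ts| |a IHa b IHb|a IHa b IHb|a IHa b IHb|x a IHa|x a IHa] e1 e2 ge //=.
- by rewrite -!map_comp; congr (Ip p _); apply: eq_map => -[v|c] /=.
- by rewrite (IHa _ e2) // (IHb _ e2).
- by rewrite (IHa _ e2) // (IHb _ e2).
- by rewrite (IHa _ e2) // (IHb _ e2).
- by do 2 f_equal; apply/funext => u; apply: IHa => v; rewrite /upd; case: ifP.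
- by do 2 f_equal; apply/funext => u; apply: IHa => v; rewrite /upd; case: ifP.
Qed.

Lemma eval_exs_attained (C : seq D) A :
  (forall d, exists2 c, c \in C & g c = g d) ->
  forall ys e, exists t, [/\ size t = size ys, all (mem C) t &
    evalg e (exs ys A) <= evalg (upds e ys t) A].
Proof.
move=> gC; elim=> [|y ys IH] e /=; first by exists [::].
pose f u := evalg (upd e y u) (exs ys A).
have [d dC _] := gC (e 0%N).
have nzC : C != [::] by apply: contraTneq dC => ->.
have [c cC Hc] := seq_argmax f nzC.
have [t [sz tC Ht]] := IH (upd e y c).
exists (c :: t); split; rewrite /= ?sz ?cC //.
apply: le_trans Ht; apply: ge_sup; first by exists (f d), d.
move=> _ [u _ <-]; change (f u <= f c); have [c' c'C gc'] := gC u.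
have -> : f u = f c' by apply: eval_comap_congr => v; rewrite /upd; case: ifP.
exact: Hc.
Qed.

End Herbrand.

Lemma exs_valid_witness (R : realType) (V : set R) (C ys : seq nat) (A : fml) :
  qfree A -> uniq ys -> {subset free_vars A <= ys} -> {subset consts A <= C} ->
  C != [::] -> valid_in V (exs ys A) ->
  forall (U : Type) (Ic : nat -> U) (Ip : nat -> seq U -> R),
  (forall p l, V (Ip p l)) -> forall e,
  exists t, [/\ size t = size ys, all (mem C) t & 1 <= eval Ic Ip e (inst ys t A)].
Proof.
move=> qA uys fvA cA nzC valid U Ic Ip VIp e.
have cC : head 0%N C \in C by rewrite -nth0 mem_nth // lt0n size_eq0.
pose proj n := if n \in C then n else head 0%N C.
pose g n := Ic (proj n).
have gIc : {in C, forall n, g n = Ic n} by move=> n nC; rewrite /g /proj nC.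
have projC n : proj n \in C by rewrite /proj; case: ifP.
have gC n : exists2 c, c \in C & g c = g n.
  by exists (proj n); [exact: projC | exact: gIc].
have [t [sz tC le1]] := @eval_exs_attained R nat U g id Ip C A gC ys id.
exists t; split => //.
have -> : eval Ic Ip e (inst ys t A) =
    eval id (fun p l => Ip p (map g l)) (upds id ys t) A.
  rewrite eval_inst //; symmetry.
  apply: (eval_qfree_morph (h := g)) => // [v /fvA vys | c /cA cC'].
    have i_lt : (index v ys < size t)%N by rewrite sz index_mem.
    rewrite (upds_nth _ 0%N) ?(upds_nth _ (Ic 0%N)) ?size_map //.
    by rewrite (nth_map 0%N) // gIc //; apply: (allP tC); rewrite mem_nth.
  exact: gIc.
by apply: le_trans le1; rewrite (valid nat 0%N id _ (fun p l => VIp p _)).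
Qed.

Theorem corollary5p2 (R : realType) (V : set R) (c0 : nat)
    (ys : seq nat) (A : fml) :
  goedel_set V ->
  qfree A ->
  uniq ys ->
  {subset free_vars A <= ys} ->
  let C := if consts A is [::] then [:: c0] else consts A in
  valid_in V (exs ys A) <->
  exists (t1 : seq nat) (ts : seq (seq nat)),
    all (fun t => (size t == size ys) && all (fun c => c \in C) t) (t1 :: ts) /\
    valid_in V (disj (inst ys t1 A) (map (fun t => inst ys t A) ts)).
Proof.
move=> [_ [V01 _]] qA uys fvA C.
have Ip01 U (Ip : nat -> seq U -> R) : (forall p l, V (Ip p l)) ->
    forall p l, 0 <= Ip p l <= 1.
  by move=> VIp p l; have := V01 _ (VIp p l); rewrite /= in_itv.
have cAC : {subset consts A <= C} by rewrite /C; case: (consts A) => // c l.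
have nzC : C != [::] by rewrite /C; case: (consts A).
split=> [valid | [t1 [ts [tsC valid]]]].
- exists (nseq (size ys) (head 0%N C)), (tuples C (size ys)); split.
    rewrite /= size_nseq eqxx all_nseq.
    rewrite -nth0 mem_nth ?orbT ?lt0n ?size_eq0 //.
    by apply/allP => t; rewrite mem_tuples.
  move=> U u0 Ic Ip VIp e; apply: (eval_eq1 u0 (Ip01 _ _ VIp)).
  have [t [sz tC Atge1]] := exs_valid_witness qA uys fvA cAC nzC valid Ic VIp e.
  apply: le_trans Atge1 (le_eval_disj _); rewrite /= inE -map_comp.
  by rewrite (map_f (fun t => eval Ic Ip e (inst ys t A))) ?orbT // mem_tuples sz eqxx.
- move=> U u0 Ic Ip VIp e; apply: (eval_eq1 u0 (Ip01 _ _ VIp)).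
  have := eval_disj_mem Ic Ip e (inst ys t1 A) (map (fun t => inst ys t A) ts).
  rewrite (valid U u0 Ic Ip VIp e) -[_ :: _]/(map (fun t => inst ys t A) (t1 :: ts)).
  rewrite -map_comp => /mapP[t tts ->] /=; have /andP[/eqP sz _] := allP tsC t tts.
  exact (le_eval_inst_exs u0 Ic e (Ip01 _ _ VIp) qA uys sz).
Qed.
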